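(* Let $G$ be a permutation group on a finite set $\Omega$ of size $t$. If $G$ contains a regular normal subgroup, then $\mathrm{I}(G)\le \log t+1$.
   Context: Logarithms are to base $2$. An irredundant base for $G$ on $\Omega$ is an ordered sequence $[\omega_1,\dots,\omega_k]$ with $G>G_{\omega_1}>G_{\omega_1,\omega_2}>\dots>G_{\omega_1,\dots,\omega_k}=1$, all inclusions strict; $\mathrm{I}(G)$ is the maximum length of an irredundant base. *)

From mathcomp Require Import all_boot all_fingroup.
From Stdlib Require Import Reals.
Set Implicit Arguments. Unset Strict Implicit. Unset Printing Implicit Defensive.

Local Open Scope group_scope.

Section Defs.
Variable T : finType.

Definition regular (N : {set {perm T}}) : Prop :=
  [transitive N, on [set: T] | 'P] /\ forall x : T, 'C_N[x | 'P] = 1.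

Definition pstab (G : {set {perm T}}) (s : seq T) : {set {perm T}} :=
  'C_G([set x in s] | 'P).

Definition irredundant_base (G : {set {perm T}}) (s : seq T) : Prop :=
  (forall i, (i < size s)%N -> pstab G (take i.+1 s) \proper pstab G (take i s))
  /\ pstab G s = 1.
End Defs.

Definition log2R (x : R) : R := (ln x / ln 2)%R.

From mathcomp Require Import all_boot all_fingroup.
From Stdlib Require Import Reals Lra.
(* Reinstate ssrnat's [m ^ n] (expn), shadowed by Stdlib's Nat.pow notation. *)
Import ssrnat.
Set Implicit Arguments. Unset Strict Implicit. Unset Printing Implicit Defensive.
Local Open Scope group_scope.

(* Fix the first base point w.  Since N is regular, n |-> n w is a bijection
   N -> T, and for h in G fixing w, h fixes n w iff h commutes with n
   (because n^h n^-1 lies in the trivial stabiliser N_w).  Hence, for the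
   stabilisers H_i = G_{w_1..w_i} (i >= 1), the centralisers D_i = C_N(H_i)
   form a chain D_1 <= ... <= D_k, which is strict because the base is
   irredundant: the point w_{i+1} = n w gives an n in D_{i+1} \ D_i.
   A strict chain of k-1 inclusions of groups forces |D_k| >= 2^(k-1), and
   D_k = C_N(1) = N has order t. *)

Lemma proper_card_double (gT : finGroupType) (H K : {group gT}) :
  H \proper K -> (#|H| * 2 <= #|K|)%N.
Proof.
case/andP=> sHK nsKH; rewrite -(Lagrange sHK) leq_mul2l.
by rewrite indexg_gt1 nsKH orbT.
Qed.

Lemma card_proper_chain (gT : finGroupType) (D : nat -> {group gT}) k :
  (forall j, j < k -> D j \proper D j.+1) -> (2 ^ k * #|D 0| <= #|D k|)%N.
Proof.
elim: k => [|k IHk] chainD; first by rewrite mul1n.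
rewrite expnS -mulnA mulnC.
apply: leq_trans (proper_card_double (chainD k (ltnSn k))).
by rewrite leq_mul2r IHk ?orbT // => j ltjk; apply/chainD/ltnW.
Qed.

Section RegularNormal.
Variable T : finType.
Implicit Types (G N : {group {perm T}}) (s t : seq T).

Lemma pstabP (G : {set {perm T}}) s h :
  reflect (h \in G /\ forall x, x \in s -> h x = x) (h \in pstab G s).
Proof.
rewrite /pstab inE; apply: (iffP andP) => [[hG /astabP fixs]|[hG fixs]].
  by split=> // x xs; apply: fixs; rewrite inE.
by split=> //; apply/astabP => x; rewrite inE => /fixs.
Qed.

Lemma pstab_rcons (G : {set {perm T}}) t x h :
  (h \in pstab G (rcons t x)) = (h \in pstab G t) && (h x == x).
Proof.
apply/pstabP/andP => [[hG fixs]|[/pstabP[hG fixt] /eqP hx]].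
  split; last by rewrite fixs // mem_rcons mem_head.
  by apply/pstabP; split=> // y yt; rewrite fixs // mem_rcons inE yt orbT.
by split=> // y; rewrite mem_rcons inE => /orP[/eqP -> | /fixt].
Qed.

Lemma card_regular N : regular N -> #|N| = #|T|.
Proof.
case=> trN regN; have [w _ orbw] := imsetP trN.
by rewrite -cardsT orbw card_orbit regN indexg1.
Qed.

Lemma fix_translate_commute G N w h n :
  G \subset 'N(N) -> 'C_N[w | 'P] = 1 -> h \in G -> h w = w -> n \in N ->
  h (n w) = n w <-> commute n h.
Proof.
move=> nNG regw hG hw nN; split=> [hfix | cnh]; last by rewrite -permM cnh permM hw.
have nhN : n ^ h \in N by rewrite memJ_norm // (subsetP nNG).
have : n ^ h * n^-1 \in 'C_N[w | 'P].
  rewrite inE groupM ?groupV //=; apply/astab1P.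
  by rewrite /= /aperm permM -{1}hw permJ hfix -permM mulgV perm1.
rewrite regw => /set1P /eqP; rewrite mulg_eq1 => /eqP; rewrite invgK => nhn.
by rewrite /commute conjgC nhn.
Qed.

Lemma cent_pstabP G N w t n :
  N <| G -> 'C_N[w | 'P] = 1 -> w \in t -> n \in N ->
  reflect (forall h, h \in pstab G t -> h (n w) = n w) (n \in 'C(pstab G t)).
Proof.
case/andP=> _ nNG regw wt nN; apply: (iffP centP) => [cn h hGt | fixn h hGt];
  have [hG fixt] := pstabP _ _ _ hGt.
- by apply/(fix_translate_commute nNG regw hG (fixt _ wt) nN)/cn.
- by apply/(fix_translate_commute nNG regw hG (fixt _ wt) nN)/fixn.
Qed.

Lemma cent_pstab_proper G N w t x :
  N <| G -> regular N -> w \in t ->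
  pstab G (rcons t x) \proper pstab G t ->
  'C_N(pstab G t) \proper 'C_N(pstab G (rcons t x)).
Proof.
move=> nNG [trN regN] wt /properP[subGtx [h hGt hGx]].
have /orbitP[n nN /= nw] : x \in orbit 'P N w by rewrite (atransP trN) ?inE.
rewrite /aperm in nw.
have wtx : w \in rcons t x by rewrite mem_rcons inE wt orbT.
apply/properP; split; first by rewrite setIS // (centS subGtx).
exists n.
  apply/setIP; split=> //; apply/(cent_pstabP nNG (regN w) wtx nN) => h'.
  by rewrite pstab_rcons nw => /andP[_ /eqP].
move: hGx; apply: contraNN => /setIP[_ /(cent_pstabP nNG (regN w) wt nN) fixn].
by rewrite pstab_rcons hGt -nw (fixn h hGt) eqxx.
Qed.

Lemma irredundant_base_size G N s :
  N <| G -> regular N -> irredundant_base G s -> (2 ^ (size s).-1 <= #|T|)%N.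
Proof.
move=> nNG regN [irr baseG]; rewrite -(card_regular regN).
case: s irr baseG => [|w s'] irr baseG; first exact: cardG_gt0.
set s := w :: s' in irr baseG *.
pose D j := 'C_N(pstab G (take j.+1 s))%G.
have chainD j : j < (size s).-1 -> D j \proper D j.+1.
  move=> ltj; have ltj1 : j.+1 < size s by [].
  rewrite /D (take_nth w ltj1).
  apply: cent_pstab_proper nNG regN _ _; first exact: mem_head.
  by rewrite -(take_nth w ltj1); apply: irr.
have DsN : D (size s).-1 = N.
  by apply/val_inj; rewrite /= take_size baseG cent1T setIT.
rewrite -DsN; apply: leq_trans (card_proper_chain chainD).
by rewrite leq_pmulr ?cardG_gt0.
Qed.

End RegularNormal.

Lemma ln_le_mono (x y : R) : (0 < x)%R -> (x <= y)%R -> (ln x <= ln y)%R.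
Proof.
move=> x_gt0 /Rle_lt_or_eq_dec [lt_xy | ->]; last exact: Rle_refl.
by apply: Rlt_le; apply: ln_increasing.
Qed.

Lemma INR_expn (m n : nat) : INR (m ^ n) = (INR m ^ n)%R.
Proof. by elim: n => [|n IHn] //; rewrite expnS mulnE mult_INR IHn. Qed.

Lemma log2R_lower_bound (m t : nat) : (2 ^ m <= t)%N -> (INR m <= log2R (INR t))%R.
Proof.
have INR2 : INR 2 = 2%R by rewrite /=; lra.
move/leP/le_INR; rewrite INR_expn INR2 => pow_le_t.
have ln2_gt0 : (0 < ln 2)%R by rewrite -ln_1; apply: ln_increasing; lra.
apply: (Rmult_le_reg_r (ln 2)) => //; rewrite /log2R /Rdiv Rmult_assoc Rinv_l; last lra.
rewrite Rmult_1_r -ln_pow; last lra.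
by apply: ln_le_mono pow_le_t; apply: pow_lt; lra.
Qed.

Theorem proposition3p1 (T : finType) (G : {group {perm T}}) :
  (exists N : {group {perm T}}, (N <| G)%g /\ regular N) ->
  forall s : seq T, irredundant_base G s ->
  (INR (size s) <= log2R (INR #|T|) + 1)%R.
Proof.
move=> [N [nNG regN]] s base.
have := log2R_lower_bound (irredundant_base_size nNG regN base).
by case: (size s) => [|k]; rewrite ?S_INR /=; lra.
Qed.
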